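(* Let $I=\langle N,M,V\rangle$ be an ordered instance of goods, let $k>0$ be an integer and let $S\subset M$ be a set of $k-1$ goods. Suppose that for each agent $i\in N$, $B_i$ is a bundle in some MMS partition of $i$ with $|B_i|=k$ and $S\subset B_i$. Then there is an agent $i'\in N$ such that allocating $B_{i'}$ to $i'$ is a valid reduction.
   Context: An instance $I=\langle N,M,V\rangle$ has agents $N=\{1,\dots,n\}$, goods $M=\{1,\dots,m\}$ and additive valuations $v_i$ with $v_i(\emptyset)=0$, $v_i(S)=\sum_{g\in S}v_i(\{g\})$, $v_{ij}:=v_i(\{j\})\ge 0$. It is ordered if $v_{ij}\ge v_{i(j+1)}$ for all $i$ and $1\le j<m$. An allocation ($n$-partition) is an ordered $n$-tuple of pairwise disjoint, possibly empty subsets of $M$ with union $M$. The maximin share of $i$ in $I$ is $\mu_i^I=\max_A\min_j v_i(A_j)$ over all allocations; an MMS partition of $i$ is an allocation $A$ with $v_i(A_j)\ge\mu_i^I$ for all $j$. Removing agents $N'\subseteq N$ and items $M'\subseteq M$ is a valid reduction if the items of $M'$ can be allocated to the agents of $N'$ so that each $i'\in N'$ receives a bundle $B_{i'}$ with $v_{i'}(B_{i'})\ge\mu_{i'}^I$, and every $i\in N\setminus N'$ satisfies $\mu_i^{I'}\ge\mu_i^I$, where $I'=\langle N\setminus N', M\setminus M', V\rangle$ (valuations restricted, maximin share computed with $|N\setminus N'|$ bundles). ''Allocating $B$ to $i$ is a valid reduction'' means this holds with $N'=\{i\}$, $M'=B$. *)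

From mathcomp Require Import all_boot all_order all_algebra.
Set Implicit Arguments. Unset Strict Implicit. Unset Printing Implicit Defensive.
Import Order.TTheory GRing.Theory Num.Theory.
Local Open Scope ring_scope.

Section Fair.
Variables (R : realFieldType) (n m : nat).
Implicit Types (v : 'I_n -> 'I_m -> R) (i : 'I_n) (G B : {set 'I_m}).

Definition val v i B : R := \sum_(g in B) v i g.

Definition nonneg_vals v : Prop := forall i g, 0 <= v i g.

Definition ordered v : Prop :=
  forall i (g g' : 'I_m), nat_of_ord g' = (nat_of_ord g).+1 -> v i g' <= v i g.

(* An allocation of the goods G into k bundles is given by an assignment
   A : goods -> 'I_k; bundle j is [set g in G | A g == j]. *)
Definition bundle k (A : {ffun 'I_m -> 'I_k}) G (j : 'I_k) : {set 'I_m} :=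
  [set g in G | A g == j].

(* min_j v_i(A_j); the seed val v i G is >= every bundle value for
   nonnegative valuations, so this is the exact minimum whenever k >= 1. *)
Definition minval v i G k (A : {ffun 'I_m -> 'I_k}) : R :=
  \big[Num.min/val v i G]_(j < k) val v i (bundle A G j).

(* maximin share of agent i for goods G split into k bundles
   (exact for k >= 1 and nonnegative valuations). *)
Definition mms v i G k : R :=
  \big[Num.max/0]_(A : {ffun 'I_m -> 'I_k}) minval v i G A.

Definition mu v i : R := mms v i setT n.

Definition mms_partition v i (A : {ffun 'I_m -> 'I_n}) : Prop :=
  forall j : 'I_n, mu v i <= val v i (bundle A setT j).

Definition in_mms_partition v i B : Prop :=
  exists A : {ffun 'I_m -> 'I_n}, mms_partition v i A /\
    exists j : 'I_n, B = bundle A setT j.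

(* allocating B to i is a valid reduction: the reduced instance has
   agents N \ {i} (n-1 of them) and goods M \ B. *)
Definition valid_reduction v i B : Prop :=
  mu v i <= val v i B /\
  forall i' : 'I_n, i' != i -> mu v i' <= mms v i' (~: B) n.-1.

End Fair.

(* Write B_i = g_i |: S and pick i' whose extra good g_i' has the largest
   index, hence the smallest value for every agent. For i <> i', take an MMS
   partition of i having B_i as bundle j and exchange the goods g_i and g_i'
   (composition with a transposition): bundle j becomes B_i', and every other
   bundle loses at most g_i' and gains g_i, so it keeps value >= mu_i. These
   n - 1 bundles partition the remaining goods, so mu_i is still guaranteed. *)

From Pilot Require Import Defs.
From mathcomp Require Import all_boot all_order all_algebra perm.
Set Implicit Arguments. Unset Strict Implicit. Unset Printing Implicit Defensive.
Import Order.TTheory GRing.Theory Num.Theory.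
Local Open Scope ring_scope.

Lemma subset_card_succ (T : finType) (S X : {set T}) :
  S \subset X -> #|X| = #|S|.+1 -> exists2 x, x \notin S & X = x |: S.
Proof.
move=> sSX cardX.
have /cards1P[x X_S] : #|X :\: S| == 1%N.
  by rewrite cardsD (setIidPr sSX) cardX subSnn.
have /setDP[_ xS] : x \in X :\: S by rewrite X_S set11.
exists x => //.
by rewrite -(setID X S) (setIidPr sSX) X_S setUC.
Qed.

Lemma preimset_tperm_setU1 (T : finType) (x y : T) (S : {set T}) :
  x \notin S -> y \notin S -> tperm x y @^-1: (x |: S) = y |: S.
Proof.
move=> xS yS; apply/setP => z; rewrite !inE.
case: tpermP => [-> | -> | /eqP/negbTE-> /eqP/negbTE->].
- by rewrite (negbTE yS) (negbTE xS) eq_sym.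
- by rewrite !eqxx.
- by [].
Qed.

Section Valuations.
Variables (R : realFieldType) (n m : nat) (v : 'I_n -> 'I_m -> R).
Variable i : 'I_n.

Lemma ordered_le_val : ordered v ->
  forall g g' : 'I_m, (g <= g')%N -> v i g' <= v i g.
Proof.
move=> v_ord g g' le_gg'.
pose f k := v i (insubd g k).
have f_anti : {in gtn m &, {homo f : k l / (k <= l)%N >-> l <= k}}.
  apply: homo_leq_in => [x | y x z le_yx le_zy | k l _ lt_lm c | k _ lt_Skm].
  - exact: lexx.
  - exact: le_trans le_zy le_yx.
  - by case/andP=> _ lt_cl; apply: ltn_trans lt_cl lt_lm.
  - by apply: v_ord; rewrite /= !insubdK //; apply: ltnW.
by have := f_anti _ _ (ltn_ord g) (ltn_ord g') le_gg'; rewrite /f !valKd.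
Qed.

Lemma le_val_preim_tperm (g g' : 'I_m) (X : {set 'I_m}) :
  g \notin X -> v i g' <= v i g ->
  Defs.val v i X <= Defs.val v i (tperm g g' @^-1: X).
Proof.
move=> gX le_g'g.
rewrite /Defs.val [leRHS](reindex_inj (@perm_inj _ (tperm g g'))).
rewrite [leRHS](eq_bigl (mem X)) => [|x]; last by rewrite !inE tpermK.
apply: ler_sum => x.
by case: tpermP => [-> /(negP gX) | -> _ | _ _ _].
Qed.

Hypothesis v_ge0 : nonneg_vals v.

Lemma subset_le_val (X Y : {set 'I_m}) :
  X \subset Y -> Defs.val v i X <= Defs.val v i Y.
Proof.
move=> sXY; rewrite /Defs.val [leRHS](big_setID X) (setIidPr sXY) lerDl.
by apply: sumr_ge0 => g _; apply: v_ge0.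
Qed.

Lemma le_mms (k : nat) (G : {set 'I_m}) (A : {ffun 'I_m -> 'I_k}) (x : R) :
  (0 < k)%N -> (forall l, x <= Defs.val v i (bundle A G l)) ->
  x <= mms v i G k.
Proof.
move=> k_gt0 x_le; apply: le_trans (le_bigmax _ _ A).
apply: le_bigmin => [|l _]; last exact: x_le.
apply: le_trans (x_le (Ordinal k_gt0)) _.
by apply/subset_le_val/subsetP => g /setIdP[].
Qed.

Lemma le_mms_setC_class (k : nat) (f : 'I_m -> 'I_k) (j : 'I_k) (x : R) :
  (1 < k)%N -> (forall l, l != j -> x <= Defs.val v i [set g | f g == l]) ->
  x <= mms v i (~: [set g | f g == j]) k.-1.
Proof.
move=> k_gt1 x_le.
have k'_gt0 : (0 < k.-1)%N by rewrite -ltnS prednK // ltnW.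
pose A := [ffun g => odflt (Ordinal k'_gt0) (unlift j (f g))].
apply: (le_mms (A := A)) => // l.
have -> : bundle A (~: [set g | f g == j]) l = [set g | f g == lift j l].
  apply/setP => g; rewrite !inE ffunE.
  case: unliftP => [l' -> | ->] /=.
    by rewrite eq_sym neq_lift (inj_eq lift_inj).
  by rewrite eqxx (negbTE (neq_lift _ _)).
by apply: x_le; rewrite eq_sym neq_lift.
Qed.

Lemma mu_le_mms_swap (A : {ffun 'I_m -> 'I_n}) (j : 'I_n) (S : {set 'I_m})
    (g g' : 'I_m) :
  (1 < n)%N -> mms_partition v i A -> bundle A setT j = g |: S ->
  g \notin S -> g' \notin S -> v i g' <= v i g ->
  mu v i <= mms v i (~: (g' |: S)) n.-1.
Proof.
move=> n_gt1 A_mms Aj gS g'S le_g'g.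
pose f x := A (tperm g g' x).
have class_f l : [set x | f x == l] = tperm g g' @^-1: bundle A setT l.
  by apply/setP => x; rewrite !inE.
rewrite -(preimset_tperm_setU1 gS g'S) -Aj -class_f.
apply: le_mms_setC_class => // l ne_lj; rewrite class_f.
apply: le_trans (A_mms l) (le_val_preim_tperm _ le_g'g).
have : g \in bundle A setT j by rewrite Aj setU11.
by rewrite !inE => /eqP->; rewrite eq_sym.
Qed.

End Valuations.

Theorem lemma12 (R : realFieldType) (n m : nat) (v : 'I_n -> 'I_m -> R)
  (n_gt0 : (0 < n)%N)
  (hnn : nonneg_vals v) (hord : ordered v)
  (k : nat) (k_gt0 : (0 < k)%N)
  (S : {set 'I_m}) (hS : #|S| = k.-1)
  (B : 'I_n -> {set 'I_m})
  (hB : forall i, in_mms_partition v i (B i))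
  (hBk : forall i, #|B i| = k)
  (hSB : forall i, S \subset B i) :
  exists i', valid_reduction v i' (B i').
Proof.
have extra_good i : exists2 g, g \notin S & B i = g |: S.
  by apply: subset_card_succ; rewrite ?hSB // hBk hS prednK.
(* w i = g_i + \sum_(s in S) s, so i' maximises the index of its extra good. *)
pose w i := (\sum_(g in B i) g)%N.
have [i' _ w_max] := @arg_maxnP _ (Ordinal n_gt0) predT w isT.
exists i'; have [g' g'S B_i'] := extra_good i'.
split; first by have [A [A_mms [j ->]]] := hB i'; apply: A_mms.
move=> i ne_ii'.
have n_gt1 : (1 < n)%N by rewrite -[n]card_ord; apply/card_gt1P; exists i, i'.
have [g gS B_i] := extra_good i.
have le_gg' : (g <= g')%N.
  by have := w_max i isT; rewrite /w B_i B_i' !big_setU1 //= leq_add2r.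
have [A [A_mms [j Aj]]] := hB i; rewrite B_i in Aj.
rewrite B_i'; apply: (mu_le_mms_swap hnn n_gt1 A_mms (esym Aj)) => //.
exact: ordered_le_val.
Qed.
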